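(* Let $p>1$ and $h\in C[0,\infty)$ with $h(s)>0$ for $s>0$. Assume that the equation $w''+h(s)|w|^{p-1}w=0$ has a solution $w_0$ on $[0,\infty)$ with $w_0(0)=0$ and $w_0(s)>0$ for $s>0$. Then for all sufficiently large $c>0$ the problem \[ w''+h(s)|w|^{p-1}w=0\ (0<s<c),\quad w(0)=w(c)=0,\quad w(s)>0\ (0<s<c), \] has a solution $w_1$ with $w_1'(0)>w_0'(0)$. *)

From Stdlib Require Import Reals.
From Coquelicot Require Import Coquelicot.
Open Scope R_scope.

Definition pnl (p w : R) : R :=
  if Req_EM_T w 0 then 0 else Rpower (Rabs w) (p - 1) * w.

Definition cont_within (D : R -> Prop) (f : R -> R) (s : R) : Prop :=
  filterlim f (within D (locally s)) (locally (f s)).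

(* (w, dw) is a classical solution of  w'' + h(s) |w|^(p-1) w = 0  with
   equation holding on the open set [Dint] and with w, w' = dw continuous up
   to the boundary on the closed set [D] (so dw s at a boundary point is the
   one-sided derivative w'(s)). *)
Definition ode_sol (p : R) (h : R -> R) (D Dint : R -> Prop) (w dw : R -> R)
  : Prop :=
  (forall s, D s -> cont_within D w s /\ cont_within D dw s) /\
  (forall s, Dint s ->
     is_derive w s (dw s) /\ is_derive dw s (- (h s * pnl p (w s)))).

From Stdlib Require Import Reals Lra Lia Psatz Classical.
From Coquelicot Require Import Coquelicot.
Open Scope R_scope.

(** Shoot from the origin.  After cutting the nonlinearity off at a level
    [cutoff] and extending [h] boundedly, the problem [u'' = - h(s) g(u)],
    [u(0) = 0], [u'(0) = lam] is globally Lipschitz: Picard iteration solves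
    it on [[0, c + 1]], and Gronwall applied to the energy
    [|u - v|^2 + |u' - v'|^2] makes the solution [u_lam] Lipschitz in [lam]
    and unique, so [u_lam0 = w0] for [lam0 = w0'(0)].  Every [u_lam] is
    concave.  For a large slope [lam_max], [u] is large on [[1, 2]], where the
    superlinear force [h u^p] bends [u'] down by more than [3 u(1)], which a
    positive concave function on [[0, c]] with [c > 3] cannot afford; so
    [u_lam_max] vanishes somewhere in [(0, c]].  At the supremum [ls] of the
    slopes [lam] such that all shots with slopes in [[lam0, lam]] stay
    positive on [(0, c]], continuity in [lam] makes [u_ls] nonnegative but
    not positive there, and concavity rules out an interior zero, so
    [u_ls (c) = 0].  Below the cutoff the truncated and original equations
    coincide. *)

Lemma continuous_of_lipschitz (f : R -> R) (k x : R) : 0 <= k ->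
  (forall y, Rabs (f y - f x) <= k * Rabs (y - x)) -> continuous f x.
Proof.
  intros Hk Hl. apply continuity_pt_filterlim.
  intros eps Heps. exists (eps / (k + 1)). split.
  - apply Rdiv_lt_0_compat; lra.
  - intros y [_ Hy]. simpl in *. unfold Rdist in *.
    eapply Rle_lt_trans; [apply Hl|].
    apply Rle_lt_trans with ((k + 1) * Rabs (y - x)).
    + apply Rmult_le_compat_r; [apply Rabs_pos|lra].
    + apply Rlt_le_trans with ((k + 1) * (eps / (k + 1))).
      * apply Rmult_lt_compat_l; lra.
      * right; field; lra.
Qed.

Definition clamp (a b x : R) := Rmax a (Rmin x b).

Lemma clamp_lipschitz a b x y : a <= b ->
  Rabs (clamp a b x - clamp a b y) <= Rabs (x - y).
Proof. intros. unfold clamp, Rmax, Rmin; repeat destruct Rle_dec; split_Rabs; lra. Qed.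

Lemma clamp_range a b x : a <= b -> a <= clamp a b x <= b.
Proof. intros. unfold clamp, Rmax, Rmin; repeat destruct Rle_dec; lra. Qed.

Lemma clamp_id a b x : a <= x <= b -> clamp a b x = x.
Proof. intros. unfold clamp, Rmax, Rmin; repeat destruct Rle_dec; lra. Qed.

Lemma continuous_clamp a b x : a <= b -> continuous (clamp a b) x.
Proof.
  intros. apply (continuous_of_lipschitz _ 1); [lra|].
  intros y. rewrite Rmult_1_l. apply clamp_lipschitz; auto.
Qed.

Lemma continuous_comp_cont_within (D : R -> Prop) (g f : R -> R) (x : R) :
  (forall t, D (g t)) -> continuous g x -> cont_within D f (g x) ->
  continuous (fun t => f (g t)) x.
Proof.
  intros HD Hg Hf. unfold continuous.
  eapply filterlim_comp; [|exact Hf].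
  intros P HP. unfold filtermap, within in *. specialize (Hg _ HP).
  eapply filter_imp; [|exact Hg]. simpl. intros t Ht. apply Ht, HD.
Qed.

Lemma cont_within_of_continuous (D : R -> Prop) (f : R -> R) x :
  continuous f x -> cont_within D f x.
Proof.
  intros Hf. eapply filterlim_filter_le_1; [|exact Hf].
  intros P HP. unfold within. eapply filter_imp; [|exact HP]. auto.
Qed.

Lemma continuous_of_cont_within_nonneg (f : R -> R) x : 0 < x ->
  cont_within (fun y => 0 <= y) f x -> continuous f x.
Proof.
  intros Hx Hf P HP. specialize (Hf P HP). unfold filtermap, within in *.
  destruct Hf as [d Hd].
  assert (Hm : 0 < Rmin d x) by (apply Rmin_pos; [apply cond_pos|lra]).
  exists (mkposreal _ Hm). intros y Hy. apply Hd.
  - eapply Rlt_le_trans; [exact Hy|]. apply Rmin_l.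
  - change (Rabs (y - x) < Rmin d x) in Hy.
    assert (Rabs (y - x) < x) by (eapply Rlt_le_trans; [exact Hy|apply Rmin_r]).
    split_Rabs; lra.
Qed.

Lemma cont_within_nonneg_at_right (f : R -> R) :
  cont_within (fun x => 0 <= x) f 0 -> filterlim f (at_right 0) (locally (f 0)).
Proof.
  intros Hf. eapply filterlim_filter_le_1; [|exact Hf].
  intros P [d Hd]. exists d. intros y Hy Hpos. apply Hd; auto. lra.
Qed.

Lemma continuous_at_right (f : R -> R) a :
  continuous f a -> filterlim f (at_right a) (locally (f a)).
Proof.
  intros Hf. eapply filterlim_filter_le_1; [|exact Hf].
  intros P [d Hd]. exists d. intros y Hy _. apply Hd; auto.
Qed.

Lemma at_right_witness (P : R -> Prop) (a b : R) : a < b -> at_right a P ->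
  exists y, a < y < b /\ P y.
Proof.
  intros Hab [d Hd]. exists (a + Rmin (d / 2) ((b - a) / 2)).
  assert (0 < d) by apply cond_pos.
  assert (Rmin (d / 2) ((b - a) / 2) <= d / 2) by apply Rmin_l.
  assert (Rmin (d / 2) ((b - a) / 2) <= (b - a) / 2) by apply Rmin_r.
  assert (0 < Rmin (d / 2) ((b - a) / 2)) by (apply Rmin_pos; lra).
  split; [lra|]. apply Hd; [|lra].
  change (Rabs (a + Rmin (d / 2) ((b - a) / 2) - a) < d).
  rewrite Rabs_right; lra.
Qed.

Lemma le_lim_at_right (g : R -> R) (x l a s : R) : a < s ->
  (forall y, a < y < s -> x <= g y) -> filterlim g (at_right a) (locally l) ->
  x <= l.
Proof.
  intros Hs Hg Hl. destruct (Rle_dec x l) as [|Hn]; auto. exfalso.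
  assert (He : 0 < x - l) by lra.
  pose proof (proj1 (filterlim_locally g l) Hl (mkposreal _ He)) as H.
  destruct (at_right_witness _ _ _ Hs H) as [y [Hy Hb]].
  specialize (Hg y Hy). change (Rabs (g y - l) < x - l) in Hb. split_Rabs; lra.
Qed.

Section FilterlimR.
Context {T : Type} {F : (T -> Prop) -> Prop} {FF : Filter F}.

Lemma filterlim_Rplus (f g : T -> R) lf lg :
  filterlim f F (locally lf) -> filterlim g F (locally lg) ->
  filterlim (fun t => f t + g t) F (locally (lf + lg)).
Proof.
  intros Hf Hg. eapply filterlim_comp_2; [exact Hf|exact Hg|].
  apply (filterlim_plus lf lg).
Qed.

Lemma filterlim_Rminus (f g : T -> R) lf lg :
  filterlim f F (locally lf) -> filterlim g F (locally lg) ->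
  filterlim (fun t => f t - g t) F (locally (lf - lg)).
Proof.
  intros Hf Hg. apply (filterlim_Rplus f (fun t => - g t)); auto.
  eapply filterlim_comp; [exact Hg|]. apply (filterlim_opp lg).
Qed.

Lemma filterlim_Rmult (f g : T -> R) lf lg :
  filterlim f F (locally lf) -> filterlim g F (locally lg) ->
  filterlim (fun t => f t * g t) F (locally (lf * lg)).
Proof.
  intros Hf Hg. eapply filterlim_comp_2; [exact Hf|exact Hg|].
  apply (filterlim_mult lf lg).
Qed.

End FilterlimR.

Lemma is_derive_continuous (f : R -> R) x l : is_derive f x l -> continuous f x.
Proof.
  intros H. apply continuity_pt_filterlim, derivable_continuous_pt.
  exists l. apply is_derive_Reals, H.
Qed.

Lemma is_derive_Rmult (f g : R -> R) x df dg :
  is_derive f x df -> is_derive g x dg ->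
  is_derive (fun t => f t * g t) x (df * g x + f x * dg).
Proof. intros H1 H2. exact (is_derive_mult f g x df dg H1 H2 Rmult_comm). Qed.

Lemma is_derive_Rplus (f g : R -> R) x df dg :
  is_derive f x df -> is_derive g x dg -> is_derive (fun t => f t + g t) x (df + dg).
Proof. intros H1 H2. exact (is_derive_plus f g x df dg H1 H2). Qed.

Lemma is_derive_Rminus (f g : R -> R) x df dg :
  is_derive f x df -> is_derive g x dg -> is_derive (fun t => f t - g t) x (df - dg).
Proof. intros H1 H2. exact (is_derive_minus f g x df dg H1 H2). Qed.

Lemma is_derive_exp_lin k x :
  is_derive (fun s => exp (- (k * s))) x (- k * exp (- (k * x))).
Proof.
  assert (Hlin : is_derive (fun s => - (k * s)) x (- (k * 1))).
  { apply (is_derive_opp (fun s => k * s)). apply is_derive_scal, (is_derive_id x). }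
  replace (- k * exp (- (k * x))) with (scal (- (k * 1)) (exp (- (k * x))))
    by (unfold scal; simpl; unfold mult; simpl; ring).
  apply (is_derive_comp exp (fun s => - (k * s))); [apply is_derive_exp|exact Hlin].
Qed.

Lemma MVT_is_derive (f df : R -> R) (a b : R) : a < b ->
  (forall x, a < x < b -> is_derive f x (df x)) ->
  (forall x, a <= x <= b -> continuous f x) ->
  exists c, a < c < b /\ f b - f a = df c * (b - a).
Proof.
  intros Hab Hd Hc.
  pose (pr1 := fun c (P : a < c < b) =>
     exist (fun l => derivable_pt_lim f c l) (df c)
       (proj1 (is_derive_Reals _ _ _) (Hd c P))).
  pose (pr2 := fun c (P : a < c < b) =>
     exist (fun l => derivable_pt_lim id c l) 1 (derivable_pt_lim_id c)).
  destruct (MVT f id a b pr1 pr2 Hab) as [c [P HP]].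
  - intros x Hx. apply continuity_pt_filterlim, Hc; auto.
  - intros x Hx. apply derivable_continuous_pt, derivable_pt_id.
  - exists c. split; auto. simpl in HP. unfold id in HP. lra.
Qed.

Lemma nonincreasing_of_derive_nonpos (f df : R -> R) (a b : R) : a <= b ->
  (forall x, a < x < b -> is_derive f x (df x) /\ df x <= 0) ->
  (forall x, a <= x <= b -> continuous f x) -> f b <= f a.
Proof.
  intros Hab Hd Hc. destruct (Req_dec a b) as [->|Hne]; [lra|].
  destruct (MVT_is_derive f df a b) as [c [Hc1 Hc2]]; try lra; auto.
  - intros x Hx; apply Hd; auto.
  - assert (df c <= 0) by (apply Hd; auto). nra.
Qed.

Lemma gronwall (psi dpsi : R -> R) (k T : R) :
  (forall s, 0 < s < T -> is_derive psi s (dpsi s) /\ dpsi s <= k * psi s) ->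
  filterlim psi (at_right 0) (locally (psi 0)) ->
  forall s, 0 <= s < T -> psi s <= psi 0 * exp (k * s).
Proof.
  intros Hd H0 s Hs.
  set (Phi := fun t => psi t * exp (- (k * t))).
  assert (Hmon : forall a b, 0 < a <= b -> b < T -> Phi b <= Phi a).
  { intros a b Hab HbT.
    apply (nonincreasing_of_derive_nonpos Phi
      (fun t => dpsi t * exp (- (k * t)) + psi t * (- k * exp (- (k * t))))); [lra| |].
    - intros x Hx. destruct (Hd x ltac:(lra)) as [Hx1 Hx2]. split.
      + apply (is_derive_Rmult psi (fun t => exp (- (k * t)))); auto.
        apply is_derive_exp_lin.
      + pose proof (exp_pos (- (k * x))). nra.
    - intros x Hx. eapply is_derive_continuous.
      apply (is_derive_Rmult psi (fun t => exp (- (k * t))));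
        [apply Hd; lra|apply is_derive_exp_lin]. }
  destruct (Req_dec s 0) as [->|Hs0].
  { rewrite Rmult_0_r, exp_0. lra. }
  assert (HP : Phi s <= psi 0).
  { apply (le_lim_at_right Phi (Phi s) (psi 0) 0 s); [lra| |].
    - intros a Ha. apply Hmon; lra.
    - replace (psi 0) with (psi 0 * exp (- (k * 0)))
        by (rewrite Rmult_0_r, Ropp_0, exp_0; ring).
      apply filterlim_Rmult; auto.
      apply (continuous_at_right (fun t => exp (- (k * t)))).
      exact (is_derive_continuous _ _ _ (is_derive_exp_lin k 0)). }
  unfold Phi in HP.
  assert (E : exp (- (k * s)) * exp (k * s) = 1)
    by (rewrite <- exp_plus; replace (- (k * s) + k * s) with 0 by ring; apply exp_0).
  pose proof (exp_pos (k * s)).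
  replace (psi s) with (psi s * exp (- (k * s)) * exp (k * s))
    by (rewrite Rmult_assoc, E; ring).
  apply Rmult_le_compat_r; lra.
Qed.

Definition cont_all (f : R -> R) := forall x, continuous f x.

Lemma cont_all_const c : cont_all (fun _ => c).
Proof. intros x. apply continuous_const. Qed.
Lemma cont_all_id : cont_all (fun t => t).
Proof. intros x. apply continuous_id. Qed.
Lemma cont_all_plus f g : cont_all f -> cont_all g -> cont_all (fun t => f t + g t).
Proof. intros Hf Hg x. apply (continuous_plus f g x); auto. Qed.
Lemma cont_all_minus f g : cont_all f -> cont_all g -> cont_all (fun t => f t - g t).
Proof. intros Hf Hg x. apply (continuous_minus f g x); auto. Qed.
Lemma cont_all_mult f g : cont_all f -> cont_all g -> cont_all (fun t => f t * g t).
Proof. intros Hf Hg x. apply (continuous_mult f g x); auto. Qed.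
Lemma cont_all_abs f : cont_all f -> cont_all (fun t => Rabs (f t)).
Proof. intros Hf x. apply continuous_Rabs_comp; auto. Qed.
Lemma cont_all_comp f g : cont_all f -> cont_all g -> cont_all (fun t => f (g t)).
Proof. intros Hf Hg x. apply (continuous_comp g f); auto. Qed.
Lemma cont_all_pow n : cont_all (fun t => t ^ n).
Proof.
  induction n; simpl; [apply cont_all_const|apply cont_all_mult; auto; apply cont_all_id].
Qed.

Lemma ex_RInt_cont_all f a b : cont_all f -> ex_RInt f a b.
Proof.
  intros Hf. apply (ex_RInt_continuous (V := R_CompleteNormedModule)). intros; apply Hf.
Qed.

Lemma is_derive_RInt_0 f x : cont_all f -> is_derive (fun s => RInt f 0 s) x (f x).
Proof.
  intros Hf. apply (is_derive_RInt f (RInt f 0) 0 x); [|apply Hf].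
  apply filter_forall. intros b.
  apply (RInt_correct (V := R_CompleteNormedModule)), ex_RInt_cont_all; auto.
Qed.

Lemma cont_all_RInt_0 f : cont_all f -> cont_all (fun s => RInt f 0 s).
Proof. intros Hf x. eapply is_derive_continuous, is_derive_RInt_0, Hf. Qed.

Lemma RInt_ext_R (f g : R -> R) a b :
  (forall x, Rmin a b < x < Rmax a b -> f x = g x) -> RInt f a b = RInt g a b.
Proof. apply (RInt_ext (V := R_CompleteNormedModule)). Qed.

Lemma RInt_scal_R f c a b : cont_all f -> RInt (fun t => c * f t) a b = c * RInt f a b.
Proof. intros Hf. apply (RInt_scal f a b c). apply ex_RInt_cont_all; auto. Qed.

Lemma RInt_minus_R f g a b : cont_all f -> cont_all g ->
  RInt (fun t => f t - g t) a b = RInt f a b - RInt g a b.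
Proof. intros Hf Hg. apply (RInt_minus f g a b); apply ex_RInt_cont_all; auto. Qed.

Lemma RInt_const_R c a b : RInt (fun _ => c) a b = c * (b - a).
Proof. rewrite RInt_const. simpl. unfold scal; simpl; unfold mult; simpl. ring. Qed.

Lemma RInt_le_R f g s : cont_all f -> cont_all g -> 0 <= s ->
  (forall t, 0 < t < s -> f t <= g t) -> RInt f 0 s <= RInt g 0 s.
Proof. intros Hf Hg Hs Hb. apply RInt_le; auto; apply ex_RInt_cont_all; auto. Qed.

Lemma abs_RInt_le_R f g s : cont_all f -> cont_all g -> 0 <= s ->
  (forall t, 0 < t < s -> Rabs (f t) <= g t) -> Rabs (RInt f 0 s) <= RInt g 0 s.
Proof.
  intros Hf Hg Hs Hb.
  eapply Rle_trans; [apply abs_RInt_le; auto; apply ex_RInt_cont_all; auto|].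
  apply RInt_le_R; auto. apply cont_all_abs; auto.
Qed.

Lemma RInt_pow n s : RInt (fun t => t ^ n) 0 s = s ^ S n / INR (S n).
Proof.
  apply is_RInt_unique.
  assert (HN : INR (S n) <> 0) by (apply not_0_INR; lia).
  replace (s ^ S n / INR (S n)) with (minus (s ^ S n / INR (S n)) (0 ^ S n / INR (S n)))
    by (simpl; unfold minus, plus, opp; simpl; field; auto).
  apply (is_RInt_derive (fun t => t ^ S n / INR (S n))).
  - intros x _.
    assert (Hd : is_derive (fun t => / INR (S n) * t ^ S n) x
                   (/ INR (S n) * (INR (S n) * 1 * x ^ Init.Nat.pred (S n)))).
    { apply is_derive_scal, is_derive_pow, (is_derive_id x). }
    apply (is_derive_ext (fun t => / INR (S n) * t ^ S n));
      [intros; unfold Rdiv; simpl; ring|].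
    replace (x ^ n) with (/ INR (S n) * (INR (S n) * 1 * x ^ Init.Nat.pred (S n)))
      by (simpl; field; auto).
    exact Hd.
  - intros x _. apply cont_all_pow.
Qed.

Lemma RInt_kernel_split f s : cont_all f ->
  RInt (fun t => (s - t) * f t) 0 s = s * RInt f 0 s - RInt (fun t => t * f t) 0 s.
Proof.
  intros Hf.
  rewrite (RInt_ext_R (fun t => (s - t) * f t) (fun t => s * f t - t * f t)) by (intros; ring).
  rewrite RInt_minus_R, RInt_scal_R; auto.
  - apply cont_all_mult; auto. apply cont_all_const.
  - apply cont_all_mult; auto. apply cont_all_id.
Qed.

(* [Rpower y _] is [1] for [y <= 0], so [ppow p 0 = 0]; [ppow] is only used on [[0, oo)]. *)
Definition ppow (p y : R) := y * Rpower y (p - 1).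

Lemma Rpower_gt0 x e : 0 < Rpower x e.
Proof. unfold Rpower. apply exp_pos. Qed.

Lemma ppow_0 p : ppow p 0 = 0.
Proof. unfold ppow. ring. Qed.

Lemma ppow_Rpower p y : 0 < y -> ppow p y = Rpower y p.
Proof.
  intros Hy. unfold ppow. replace p with (1 + (p - 1)) at 2 by ring.
  rewrite Rpower_plus, Rpower_1; auto.
Qed.

Lemma ppow_pnl p y : 0 < y -> ppow p y = pnl p y.
Proof.
  intros Hy. unfold ppow, pnl. destruct (Req_EM_T y 0); [lra|].
  rewrite Rabs_right by lra. ring.
Qed.

Lemma ppow_ge0 p y : 0 <= y -> 0 <= ppow p y.
Proof. intros. unfold ppow. pose proof (Rpower_gt0 y (p - 1)). nra. Qed.

Lemma ppow_gt0 p y : 0 < y -> 0 < ppow p y.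
Proof. intros. unfold ppow. pose proof (Rpower_gt0 y (p - 1)). nra. Qed.

Lemma ppow_le_compat p x y : 1 <= p -> 0 <= x <= y -> ppow p x <= ppow p y.
Proof.
  intros Hp [Hx Hxy]. destruct (Req_dec x 0) as [->|Hx0].
  - rewrite ppow_0. apply ppow_ge0; lra.
  - unfold ppow. assert (Rpower x (p - 1) <= Rpower y (p - 1)) by (apply Rle_Rpower_l; lra).
    pose proof (Rpower_gt0 x (p - 1)). nra.
Qed.

Lemma ppow_lipschitz_on p K x y : 1 < p -> 0 < K -> 0 <= x <= y -> y <= K ->
  ppow p y - ppow p x <= p * Rpower K (p - 1) * (y - x).
Proof.
  intros Hp HK [Hx Hxy] HyK. pose proof (Rpower_gt0 K (p - 1)) as HRK.
  assert (HyK' : forall z, 0 < z <= K -> Rpower z (p - 1) <= Rpower K (p - 1))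
    by (intros z Hz; apply Rle_Rpower_l; lra).
  destruct (Req_dec x 0) as [->|Hx0].
  - rewrite ppow_0. unfold ppow. destruct (Req_dec y 0) as [->|Hy0]; [nra|].
    pose proof (HyK' y ltac:(lra)).
    assert (y * Rpower y (p - 1) <= y * Rpower K (p - 1)) by (apply Rmult_le_compat_l; lra).
    assert (0 <= (p - 1) * Rpower K (p - 1) * y)
      by (apply Rmult_le_pos; [apply Rmult_le_pos|]; lra).
    lra.
  - destruct (Req_dec x y) as [<-|Hne]; [right; ring|].
    destruct (MVT_is_derive (fun t => Rpower t p) (fun t => p * Rpower t (p - 1)) x y)
      as [c [Hc Hc2]]; [lra| | |].
    + intros t Ht. apply is_derive_Reals, derivable_pt_lim_power. lra.
    + intros t Ht. eapply is_derive_continuous, is_derive_Reals, derivable_pt_lim_power. lra.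
    + rewrite !ppow_Rpower by lra. rewrite Hc2. pose proof (HyK' c ltac:(lra)).
      apply Rmult_le_compat_r; [lra|]. apply Rmult_le_compat_l; lra.
Qed.

Definition ppow_trunc (p K w : R) := ppow p (clamp 0 K w).

Lemma ppow_trunc_lipschitz p K a b : 1 < p -> 0 < K ->
  Rabs (ppow_trunc p K a - ppow_trunc p K b) <= p * Rpower K (p - 1) * Rabs (a - b).
Proof.
  intros Hp HK. unfold ppow_trunc.
  pose proof (clamp_range 0 K a) as Ha. pose proof (clamp_range 0 K b) as Hb.
  pose proof (clamp_lipschitz 0 K a b) as Hl.
  pose proof (Rpower_gt0 K (p - 1)).
  set (x := clamp 0 K a) in *. set (y := clamp 0 K b) in *.
  apply Rle_trans with (p * Rpower K (p - 1) * Rabs (x - y)).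
  2: { apply Rmult_le_compat_l; [nra|]. apply Hl; lra. }
  destruct (Rle_dec x y).
  - pose proof (ppow_lipschitz_on p K x y Hp HK ltac:(lra) ltac:(lra)).
    pose proof (ppow_le_compat p x y ltac:(lra) ltac:(lra)).
    rewrite Rabs_left1 by lra. rewrite (Rabs_left1 (x - y)) by lra. lra.
  - pose proof (ppow_lipschitz_on p K y x Hp HK ltac:(lra) ltac:(lra)).
    pose proof (ppow_le_compat p y x ltac:(lra) ltac:(lra)).
    rewrite Rabs_right by lra. rewrite (Rabs_right (x - y)) by lra. lra.
Qed.

Lemma ppow_trunc_bounds p K a : 1 < p -> 0 < K -> 0 <= ppow_trunc p K a <= ppow p K.
Proof.
  intros. pose proof (clamp_range 0 K a). unfold ppow_trunc. split.
  - apply ppow_ge0; lra.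
  - apply ppow_le_compat; lra.
Qed.

Lemma ppow_trunc_le p K w y : 1 <= p -> 0 < K -> 0 <= y -> w <= y ->
  ppow_trunc p K w <= ppow p y.
Proof.
  intros Hp HK Hy Hwy. unfold ppow_trunc. pose proof (clamp_range 0 K w).
  apply ppow_le_compat; auto. split; [lra|].
  unfold clamp, Rmax, Rmin; repeat destruct Rle_dec; lra.
Qed.

Lemma ppow_trunc_id p K a : 0 <= a <= K -> ppow_trunc p K a = ppow p a.
Proof. intros. unfold ppow_trunc. rewrite clamp_id; auto. Qed.

(** * Concave functions *)

Section Concave.
Variables (u du : R -> R) (T : R).
Hypothesis u_cont : cont_all u.
Hypothesis u_deriv : forall s, 0 < s < T -> is_derive u s (du s).
Hypothesis du_nonincr : forall a b, 0 <= a <= b -> b <= T -> du b <= du a.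

Lemma concave_MVT a b : 0 <= a < b -> b <= T ->
  exists x, a < x < b /\ u b - u a = du x * (b - a).
Proof.
  intros Hab HbT. apply MVT_is_derive; [lra| |intros; apply u_cont].
  intros x Hx. apply u_deriv. lra.
Qed.

Lemma concave_above_chord a x b : 0 <= a < x -> x < b <= T ->
  u a * (b - x) + u b * (x - a) <= u x * (b - a).
Proof.
  intros Hax Hxb.
  destruct (concave_MVT a x) as [x1 [Hx1 HM1]]; [lra|lra|].
  destruct (concave_MVT x b) as [x2 [Hx2 HM2]]; [lra|lra|].
  pose proof (du_nonincr x1 x2 ltac:(lra) ltac:(lra)).
  assert (0 <= (du x1 - du x2) * ((b - x) * (x - a))) by (apply Rmult_le_pos; nra).
  assert (E : u a * (b - x) + u b * (x - a) - u x * (b - a)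
            = (u b - u x) * (x - a) - (u x - u a) * (b - x)) by ring.
  rewrite HM1, HM2 in E. nra.
Qed.

Lemma concave_le_tangent0 s : 0 <= s <= T -> u s <= u 0 + du 0 * s.
Proof.
  intros Hs. destruct (Req_dec s 0) as [->|Hs0]; [lra|].
  destruct (concave_MVT 0 s) as [x [Hx HM]]; [lra|lra|].
  pose proof (du_nonincr 0 x ltac:(lra) ltac:(lra)). nra.
Qed.

Lemma concave_slope_drop c : 3 < c <= T -> u 0 = 0 -> 0 <= u 2 -> 0 <= u c ->
  du 1 - du 2 <= 3 * u 1.
Proof.
  intros Hc Hu0 Hu2 Huc.
  assert (D1 : du 1 <= u 1).
  { destruct (concave_MVT 0 1) as [x [Hx HM]]; [lra|lra|].
    pose proof (du_nonincr x 1 ltac:(lra) ltac:(lra)). lra. }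
  assert (D2 : u 2 - u 1 <= du 1).
  { destruct (concave_MVT 1 2) as [x [Hx HM]]; [lra|lra|].
    pose proof (du_nonincr 1 x ltac:(lra) ltac:(lra)). lra. }
  assert (D3 : - u 2 <= du 2).
  { destruct (concave_MVT 2 c) as [x [Hx HM]]; [lra|lra|].
    pose proof (du_nonincr 2 x ltac:(lra) ltac:(lra)).
    assert (du x * (c - 2) <= du 2 * (c - 2)) by (apply Rmult_le_compat_r; lra).
    destruct (Rle_dec 0 (du 2)); [lra|nra]. }
  lra.
Qed.

End Concave.

(** * The truncated initial value problem *)

Section TruncatedIVP.
Variables (H G : R -> R) (T Hb Lg Gb : R).
Hypothesis T_pos : 0 < T.
Hypothesis H_cont : cont_all H.
Hypothesis H_bounds : forall x, 0 <= H x <= Hb.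
Hypothesis G_lipschitz : forall a b, Rabs (G a - G b) <= Lg * Rabs (a - b).
Hypothesis G_bounds : forall a, 0 <= G a <= Gb.

Lemma Hb_ge0 : 0 <= Hb.
Proof. pose proof (H_bounds 0); lra. Qed.

Lemma Gb_ge0 : 0 <= Gb.
Proof. pose proof (G_bounds 0); lra. Qed.

Lemma Lg_ge0 : 0 <= Lg.
Proof.
  pose proof (G_lipschitz 1 0) as HL. pose proof (Rabs_pos (G 1 - G 0)).
  rewrite Rminus_0_r, Rabs_R1 in HL. lra.
Qed.

Lemma HbLg_ge0 : 0 <= Hb * Lg.
Proof. pose proof Hb_ge0. pose proof Lg_ge0. apply Rmult_le_pos; lra. Qed.

Lemma HbGb_ge0 : 0 <= Hb * Gb.
Proof. pose proof Hb_ge0. pose proof Gb_ge0. apply Rmult_le_pos; lra. Qed.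

Lemma G_cont : cont_all G.
Proof.
  intros x. apply (continuous_of_lipschitz _ Lg); [apply Lg_ge0|].
  intros y. apply G_lipschitz.
Qed.

(* Clamping time to [[0, T]] makes every Picard iterate continuous on all of [R]. *)
Definition clampT s := clamp 0 T s.
Definition force (u : R -> R) t := H t * G (u t).
Definition picard_map lam (u : R -> R) s :=
  lam * clampT s - RInt (fun t => (clampT s - t) * force u t) 0 (clampT s).
Definition picard_iter lam n := Nat.iter n (picard_map lam) (fun s => lam * clampT s).

Lemma clampT_range s : 0 <= clampT s <= T.
Proof. apply clamp_range; lra. Qed.

Lemma clampT_id s : 0 <= s <= T -> clampT s = s.
Proof. apply clamp_id. Qed.

Lemma cont_all_clampT : cont_all clampT.
Proof. intros x. apply continuous_clamp; lra. Qed.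

Lemma cont_all_force u : cont_all u -> cont_all (force u).
Proof. intros Hu. apply cont_all_mult; auto. apply cont_all_comp; auto. apply G_cont. Qed.

Lemma force_bounds u t : 0 <= force u t <= Hb * Gb.
Proof.
  unfold force. pose proof (H_bounds t). pose proof (G_bounds (u t)).
  split; [nra|]. apply Rmult_le_compat; lra.
Qed.

Lemma force_lipschitz u v t :
  Rabs (force u t - force v t) <= Hb * Lg * Rabs (u t - v t).
Proof.
  unfold force. rewrite <- Rmult_minus_distr_l, Rabs_mult, Rmult_assoc.
  pose proof (H_bounds t). rewrite Rabs_right by lra.
  apply Rmult_le_compat; try lra. apply Rabs_pos. apply G_lipschitz.
Qed.

Lemma picard_map_split lam u s : cont_all u ->
  picard_map lam u s = lam * clampT s -
    (clampT s * RInt (force u) 0 (clampT s) - RInt (fun t => t * force u t) 0 (clampT s)).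
Proof. intros Hu. unfold picard_map. rewrite RInt_kernel_split; auto. apply cont_all_force, Hu. Qed.

Lemma cont_all_picard_map lam u : cont_all u -> cont_all (picard_map lam u).
Proof.
  intros Hu x.
  eapply continuous_ext; [intros s; symmetry; apply picard_map_split, Hu|]. revert x.
  apply (cont_all_comp (fun r => lam * r -
    (r * RInt (force u) 0 r - RInt (fun t => t * force u t) 0 r)) clampT);
    [|apply cont_all_clampT].
  apply cont_all_minus; [apply cont_all_mult; [apply cont_all_const|apply cont_all_id]|].
  apply cont_all_minus.
  - apply cont_all_mult; [apply cont_all_id|]. apply cont_all_RInt_0, cont_all_force, Hu.
  - apply cont_all_RInt_0, cont_all_mult; [apply cont_all_id|apply cont_all_force, Hu].
Qed.

Lemma cont_all_kernel u s : cont_all u -> cont_all (fun t => (clampT s - t) * force u t).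
Proof.
  intros Hu. apply cont_all_mult; [|apply cont_all_force, Hu].
  apply cont_all_minus; [apply cont_all_const|apply cont_all_id].
Qed.

Lemma picard_map_dist lam u v s : cont_all u -> cont_all v ->
  Rabs (picard_map lam u s - picard_map lam v s) <=
    T * (Hb * Lg) * RInt (fun t => Rabs (u t - v t)) 0 (clampT s).
Proof.
  intros Hu Hv. unfold picard_map. pose proof (clampT_range s) as Hs.
  replace (lam * clampT s - RInt (fun t => (clampT s - t) * force u t) 0 (clampT s) -
     (lam * clampT s - RInt (fun t => (clampT s - t) * force v t) 0 (clampT s)))
    with (RInt (fun t => (clampT s - t) * force v t) 0 (clampT s) -
          RInt (fun t => (clampT s - t) * force u t) 0 (clampT s)) by ring.
  rewrite <- RInt_minus_R by (apply cont_all_kernel; auto).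
  rewrite <- RInt_scal_R by (apply cont_all_abs, cont_all_minus; auto).
  apply abs_RInt_le_R; try lra.
  - apply cont_all_minus; apply cont_all_kernel; auto.
  - apply cont_all_mult; [apply cont_all_const|apply cont_all_abs, cont_all_minus; auto].
  - intros t Ht. rewrite <- Rmult_minus_distr_l, Rabs_mult, Rabs_right by lra.
    assert (A : Rabs (force v t - force u t) <= Hb * Lg * Rabs (u t - v t))
      by (rewrite Rabs_minus_sym; apply force_lipschitz).
    pose proof (Rabs_pos (force v t - force u t)).
    apply Rle_trans with (T * Rabs (force v t - force u t)).
    + apply Rmult_le_compat_r; lra.
    + rewrite Rmult_assoc. apply Rmult_le_compat_l; lra.
Qed.

Lemma picard_map_move lam u s : cont_all u ->
  Rabs (picard_map lam u s - lam * clampT s) <= T * T * (Hb * Gb).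
Proof.
  intros Hu. unfold picard_map. pose proof (clampT_range s) as Hs.
  pose proof HbGb_ge0.
  replace (lam * clampT s - RInt (fun t => (clampT s - t) * force u t) 0 (clampT s)
           - lam * clampT s)
    with (- RInt (fun t => (clampT s - t) * force u t) 0 (clampT s)) by ring.
  rewrite Rabs_Ropp.
  apply Rle_trans with (RInt (fun _ => T * (Hb * Gb)) 0 (clampT s)).
  - apply abs_RInt_le_R; try lra; [apply cont_all_kernel, Hu|apply cont_all_const|].
    intros t Ht. pose proof (force_bounds u t).
    rewrite Rabs_mult, !Rabs_right by lra. apply Rmult_le_compat; lra.
  - rewrite RInt_const_R.
    apply Rle_trans with (T * (Hb * Gb) * T); [apply Rmult_le_compat_l; nra|right; ring].
Qed.

Lemma cont_all_picard_iter lam n : cont_all (picard_iter lam n).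
Proof.
  induction n as [|n IH].
  - apply cont_all_mult; [apply cont_all_const|apply cont_all_clampT].
  - apply cont_all_picard_map, IH.
Qed.

Definition picard_rate := T * (Hb * Lg) * T.
Definition picard_step0 := T * T * (Hb * Gb).
Definition picard_term k := picard_step0 * picard_rate ^ k / INR (Factorial.fact k).
Fixpoint picard_partial n :=
  match n with O => 0 | S n => picard_partial n + picard_term n end.
Definition picard_total := picard_step0 * exp picard_rate.

Lemma picard_iter_step lam n s :
  Rabs (picard_iter lam (S n) s - picard_iter lam n s) <=
    picard_step0 * (T * (Hb * Lg) * clampT s) ^ n / INR (Factorial.fact n).
Proof.
  revert s. induction n as [|n IH]; intros s.
  - simpl. replace (picard_step0 * 1 / 1) with picard_step0 by field.
    apply picard_map_move, (cont_all_picard_iter lam 0).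
  - change (picard_iter lam (S (S n)) s) with (picard_map lam (picard_iter lam (S n)) s).
    change (picard_iter lam (S n) s) with (picard_map lam (picard_iter lam n) s).
    eapply Rle_trans; [apply picard_map_dist; apply cont_all_picard_iter|].
    set (c1 := T * (Hb * Lg)). pose proof (clampT_range s) as Hs.
    assert (Hc1 : 0 <= c1) by (apply Rmult_le_pos; [lra|apply HbLg_ge0]).
    set (C := picard_step0 * c1 ^ n / INR (Factorial.fact n)).
    apply Rle_trans with (c1 * RInt (fun t => C * t ^ n) 0 (clampT s)).
    + apply Rmult_le_compat_l; auto. apply RInt_le_R; try lra.
      * apply cont_all_abs, cont_all_minus; apply cont_all_picard_iter.
      * apply cont_all_mult; [apply cont_all_const|apply cont_all_pow].
      * intros t Ht. eapply Rle_trans; [apply IH|]. rewrite clampT_id by lra.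
        right. unfold C, c1. rewrite Rpow_mult_distr. unfold Rdiv. ring.
    + rewrite RInt_scal_R, RInt_pow by apply cont_all_pow. unfold C.
      rewrite fact_simpl, mult_INR, S_INR.
      change ((c1 * clampT s) ^ S n) with (c1 * clampT s * (c1 * clampT s) ^ n).
      change (clampT s ^ S n) with (clampT s * clampT s ^ n).
      rewrite Rpow_mult_distr.
      pose proof (INR_fact_neq_0 n). pose proof (pos_INR n).
      right. field. split; auto. lra.
Qed.

Lemma picard_rate_ge0 : 0 <= picard_rate.
Proof.
  unfold picard_rate. pose proof HbLg_ge0.
  apply Rmult_le_pos; [apply Rmult_le_pos|]; lra.
Qed.

Lemma picard_step0_ge0 : 0 <= picard_step0.
Proof.
  unfold picard_step0. pose proof HbGb_ge0.
  apply Rmult_le_pos; [apply Rmult_le_pos|]; lra.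
Qed.

Lemma picard_term_ge0 k : 0 <= picard_term k.
Proof.
  unfold picard_term, Rdiv. pose proof picard_step0_ge0. pose proof picard_rate_ge0.
  apply Rmult_le_pos; [apply Rmult_le_pos; auto; apply pow_le; auto|].
  left; apply Rinv_0_lt_compat, INR_fact_lt_0.
Qed.

Lemma picard_iter_step_unif lam n s :
  Rabs (picard_iter lam (S n) s - picard_iter lam n s) <= picard_term n.
Proof.
  eapply Rle_trans; [apply picard_iter_step|].
  pose proof (clampT_range s) as Hs. pose proof HbLg_ge0. pose proof picard_step0_ge0.
  unfold picard_term, Rdiv. apply Rmult_le_compat_r.
  { left. apply Rinv_0_lt_compat, INR_fact_lt_0. }
  apply Rmult_le_compat_l; auto. unfold picard_rate. apply pow_incr.
  split; [apply Rmult_le_pos; [apply Rmult_le_pos|]; lra|].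
  apply Rmult_le_compat_l; [apply Rmult_le_pos|]; lra.
Qed.

Lemma picard_partial_le_shift n k : picard_partial n <= picard_partial (k + n).
Proof. induction k; simpl; [lra|]. pose proof (picard_term_ge0 (k + n)). lra. Qed.

Lemma picard_iter_cauchy lam n k s :
  Rabs (picard_iter lam (k + n) s - picard_iter lam n s)
    <= picard_partial (k + n) - picard_partial n.
Proof.
  induction k as [|k IH].
  - simpl. rewrite Rminus_diag, Rabs_R0. lra.
  - change (S k + n)%nat with (S (k + n)). simpl picard_partial.
    replace (picard_iter lam (S (k + n)) s - picard_iter lam n s) with
      ((picard_iter lam (S (k + n)) s - picard_iter lam (k + n) s) +
       (picard_iter lam (k + n) s - picard_iter lam n s)) by ring.
    eapply Rle_trans; [apply Rabs_triang|].
    pose proof (picard_iter_step_unif lam (k + n) s). lra.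
Qed.

Lemma picard_partial_lim : is_lim_seq picard_partial picard_total.
Proof.
  apply is_lim_seq_incr_1.
  assert (Hs : forall n, picard_partial (S n) =
     picard_step0 * sum_f_R0 (fun i => / INR (Factorial.fact i) * picard_rate ^ i) n).
  { induction n as [|n IH].
    - simpl. unfold picard_term. simpl. field.
    - change (picard_partial (S (S n))) with (picard_partial (S n) + picard_term (S n)).
      rewrite IH, tech5. unfold picard_term, Rdiv. ring. }
  apply (is_lim_seq_ext (fun n =>
    picard_step0 * sum_f_R0 (fun i => / INR (Factorial.fact i) * picard_rate ^ i) n)).
  { intros n; rewrite Hs; auto. }
  apply (is_lim_seq_scal_l _ picard_step0 (exp picard_rate)).
  apply is_lim_seq_Reals. exact (proj2_sig (exist_exp picard_rate)).
Qed.

Lemma picard_partial_le_total n : picard_partial n <= picard_total.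
Proof.
  assert (H1 : is_lim_seq (fun k => picard_partial (k + n)) picard_total)
    by (apply is_lim_seq_incr_n, picard_partial_lim).
  exact (is_lim_seq_le (fun _ => picard_partial n) (fun k => picard_partial (k + n))
    (picard_partial n) picard_total (fun k => picard_partial_le_shift n k)
    (is_lim_seq_const _) H1).
Qed.

Lemma picard_partial_near_total eps : 0 < eps ->
  exists N, picard_total - picard_partial N < eps.
Proof.
  intros He.
  destruct (proj2 (is_lim_seq_spec picard_partial picard_total) picard_partial_lim
    (mkposreal _ He)) as [N HN].
  exists N. specialize (HN N (le_n N)). simpl in HN. split_Rabs; lra.
Qed.

Definition ivp_sol lam s := real (Lim_seq (fun n => picard_iter lam n s)).

Lemma ivp_sol_lim lam s : is_lim_seq (fun n => picard_iter lam n s) (ivp_sol lam s).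
Proof.
  assert (Hex : ex_finite_lim_seq (fun n => picard_iter lam n s)).
  { apply ex_lim_seq_cauchy_corr. intros eps.
    assert (Hps : ex_finite_lim_seq picard_partial)
      by (exists picard_total; apply picard_partial_lim).
    destruct (proj1 (ex_lim_seq_cauchy_corr picard_partial) Hps eps) as [N HN].
    exists N. intros n m Hn Hm.
    destruct (Compare_dec.le_lt_dec n m) as [Hnm|Hnm].
    - replace m with ((m - n) + n)%nat by lia.
      rewrite Rabs_minus_sym. eapply Rle_lt_trans; [apply picard_iter_cauchy|].
      specialize (HN n ((m - n) + n)%nat Hn ltac:(lia)).
      pose proof (picard_partial_le_shift n (m - n)). split_Rabs; lra.
    - replace n with ((n - m) + m)%nat by lia.
      eapply Rle_lt_trans; [apply picard_iter_cauchy|].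
      specialize (HN ((n - m) + m)%nat m ltac:(lia) Hm).
      pose proof (picard_partial_le_shift m (n - m)). split_Rabs; lra. }
  destruct Hex as [l Hl]. unfold ivp_sol. rewrite (is_lim_seq_unique _ _ Hl). exact Hl.
Qed.

Lemma ivp_sol_tail lam n s :
  Rabs (ivp_sol lam s - picard_iter lam n s) <= picard_total - picard_partial n.
Proof.
  assert (H1 : is_lim_seq (fun k => Rabs (picard_iter lam (k + n) s - picard_iter lam n s))
                 (Rabs (ivp_sol lam s - picard_iter lam n s))).
  { apply (is_lim_seq_abs _ (ivp_sol lam s - picard_iter lam n s)).
    apply is_lim_seq_minus'; [|apply is_lim_seq_const].
    apply (is_lim_seq_incr_n (fun k => picard_iter lam k s)), ivp_sol_lim. }
  assert (H2 : is_lim_seq (fun k => picard_partial (k + n) - picard_partial n)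
                 (picard_total - picard_partial n)).
  { apply is_lim_seq_minus'; [|apply is_lim_seq_const].
    apply is_lim_seq_incr_n, picard_partial_lim. }
  exact (is_lim_seq_le _ _ _ _ (fun k => picard_iter_cauchy lam n k s) H1 H2).
Qed.

Lemma cont_all_ivp_sol lam : cont_all (ivp_sol lam).
Proof.
  intros x. apply continuity_pt_filterlim. intros eps Heps.
  destruct (picard_partial_near_total (eps / 3)) as [N HN]; [lra|].
  pose proof (cont_all_picard_iter lam N x) as Hc. apply continuity_pt_filterlim in Hc.
  destruct (Hc (eps / 3) ltac:(lra)) as [alp [Halp Hd]].
  exists alp. split; auto. intros y Hy. specialize (Hd y Hy). simpl in *. unfold Rdist in *.
  pose proof (ivp_sol_tail lam N y). pose proof (ivp_sol_tail lam N x).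
  replace (ivp_sol lam y - ivp_sol lam x) with
    ((ivp_sol lam y - picard_iter lam N y) + (picard_iter lam N y - picard_iter lam N x)
     - (ivp_sol lam x - picard_iter lam N x)) by ring.
  eapply Rle_lt_trans; [apply Rabs_triang|]. rewrite Rabs_Ropp.
  eapply Rle_lt_trans; [apply Rplus_le_compat_r, Rabs_triang|]. lra.
Qed.

Lemma ivp_sol_defect lam n s :
  Rabs (ivp_sol lam s - picard_map lam (ivp_sol lam) s)
    <= (1 + picard_rate) * (picard_total - picard_partial n).
Proof.
  set (u := ivp_sol lam).
  replace (u s - picard_map lam u s) with
    ((u s - picard_iter lam (S n) s) + (picard_map lam (picard_iter lam n) s - picard_map lam u s))
    by (change (picard_iter lam (S n) s) with (picard_map lam (picard_iter lam n) s); ring).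
  eapply Rle_trans; [apply Rabs_triang|].
  pose proof (ivp_sol_tail lam (S n) s) as Htail. fold u in Htail.
  pose proof (picard_term_ge0 n). pose proof (clampT_range s).
  assert (Hn0 : 0 <= picard_total - picard_partial n)
    by (pose proof (picard_partial_le_total n); lra).
  pose proof (picard_map_dist lam (picard_iter lam n) u s
                (cont_all_picard_iter lam n) (cont_all_ivp_sol lam)) as Hd.
  assert (HI : RInt (fun t => Rabs (picard_iter lam n t - u t)) 0 (clampT s)
                 <= (picard_total - picard_partial n) * T).
  { apply Rle_trans with (RInt (fun _ => picard_total - picard_partial n) 0 (clampT s)).
    - apply RInt_le_R; try lra.
      + apply cont_all_abs, cont_all_minus; [apply cont_all_picard_iter|apply cont_all_ivp_sol].
      + apply cont_all_const.
      + intros t _. rewrite Rabs_minus_sym. apply ivp_sol_tail.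
    - rewrite RInt_const_R. apply Rmult_le_compat_l; lra. }
  assert (T * (Hb * Lg) * RInt (fun t => Rabs (picard_iter lam n t - u t)) 0 (clampT s)
            <= picard_rate * (picard_total - picard_partial n)).
  { unfold picard_rate.
    apply Rle_trans with (T * (Hb * Lg) * ((picard_total - picard_partial n) * T)).
    - apply Rmult_le_compat_l; [|exact HI]. pose proof HbLg_ge0. apply Rmult_le_pos; lra.
    - right; ring. }
  simpl picard_partial in *. lra.
Qed.

Lemma ivp_sol_fixpoint lam s : ivp_sol lam s = picard_map lam (ivp_sol lam) s.
Proof.
  set (e := Rabs (ivp_sol lam s - picard_map lam (ivp_sol lam) s)).
  assert (He : e <= 0).
  { apply Rnot_lt_le. intros He. pose proof picard_rate_ge0.
    destruct (picard_partial_near_total (e / (1 + picard_rate))) as [N HN];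
      [apply Rdiv_lt_0_compat; lra|].
    pose proof (ivp_sol_defect lam N s) as Hd. fold e in Hd.
    assert ((1 + picard_rate) * (picard_total - picard_partial N) < e).
    { apply Rmult_lt_reg_l with (/ (1 + picard_rate)); [apply Rinv_0_lt_compat; lra|].
      rewrite <- Rmult_assoc, Rinv_l, Rmult_1_l by lra. rewrite Rmult_comm. exact HN. }
    lra. }
  destruct (Req_dec (ivp_sol lam s - picard_map lam (ivp_sol lam) s) 0) as [|Hne]; [lra|].
  pose proof (Rabs_pos_lt _ Hne). unfold e in He. lra.
Qed.

Definition ivp_dsol lam s := lam - RInt (force (ivp_sol lam)) 0 (clampT s).

Lemma cont_all_ivp_dsol lam : cont_all (ivp_dsol lam).
Proof.
  apply cont_all_minus; [apply cont_all_const|].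
  apply (cont_all_comp (fun s => RInt (force (ivp_sol lam)) 0 s) clampT);
    [|apply cont_all_clampT].
  apply cont_all_RInt_0, cont_all_force, cont_all_ivp_sol.
Qed.

Lemma ivp_sol_0 lam : ivp_sol lam 0 = 0.
Proof.
  rewrite ivp_sol_fixpoint. unfold picard_map. rewrite clampT_id by lra.
  rewrite RInt_point. simpl. unfold zero; simpl. ring.
Qed.

Lemma ivp_dsol_0 lam : ivp_dsol lam 0 = lam.
Proof.
  unfold ivp_dsol. rewrite clampT_id by lra. rewrite RInt_point. unfold zero; simpl. ring.
Qed.

Lemma locally_clampT_id s : 0 < s < T -> locally s (fun t => clampT t = t).
Proof.
  intros Hs. apply (locally_interval _ s 0 T); simpl; try lra.
  intros y Hy1 Hy2. apply clampT_id. lra.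
Qed.

Lemma is_derive_ivp_sol lam s : 0 < s < T -> is_derive (ivp_sol lam) s (ivp_dsol lam s).
Proof.
  intros Hs. set (u := ivp_sol lam).
  assert (HF : cont_all (force u)) by apply cont_all_force, cont_all_ivp_sol.
  assert (HtF : cont_all (fun t => t * force u t)) by (apply cont_all_mult; [apply cont_all_id|auto]).
  apply (is_derive_ext_loc (fun t => lam * t -
           (t * RInt (force u) 0 t - RInt (fun t => t * force u t) 0 t))).
  { eapply filter_imp; [|apply (locally_clampT_id s Hs)]. simpl. intros t Ht.
    unfold u. rewrite ivp_sol_fixpoint, picard_map_split, Ht by apply cont_all_ivp_sol.
    reflexivity. }
  unfold ivp_dsol. rewrite clampT_id by lra. fold u.
  replace (lam - RInt (force u) 0 s) with
    (lam * 1 - (1 * RInt (force u) 0 s + s * force u s - s * force u s)) by ring.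
  apply (is_derive_Rminus (fun t => lam * t)); [apply is_derive_scal, (is_derive_id s)|].
  apply is_derive_Rminus; [|apply (is_derive_RInt_0 (fun t => t * force u t)); auto].
  apply is_derive_Rmult; [apply (is_derive_id s)|apply is_derive_RInt_0; auto].
Qed.

Lemma is_derive_ivp_dsol lam s : 0 < s < T ->
  is_derive (ivp_dsol lam) s (- force (ivp_sol lam) s).
Proof.
  intros Hs. set (u := ivp_sol lam).
  apply (is_derive_ext_loc (fun t => lam - RInt (force u) 0 t)).
  { eapply filter_imp; [|apply (locally_clampT_id s Hs)]. simpl. intros t Ht.
    unfold ivp_dsol. rewrite Ht. reflexivity. }
  replace (- force u s) with (0 - force u s) by ring.
  apply is_derive_Rminus; [apply (is_derive_const lam s)|].
  apply is_derive_RInt_0, cont_all_force, cont_all_ivp_sol.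
Qed.

Lemma ivp_dsol_nonincr lam a b : 0 <= a <= b -> b <= T -> ivp_dsol lam b <= ivp_dsol lam a.
Proof.
  intros Hab HbT.
  apply (nonincreasing_of_derive_nonpos (ivp_dsol lam) (fun s => - force (ivp_sol lam) s));
    [lra| |intros; apply cont_all_ivp_dsol].
  intros x Hx. split; [apply is_derive_ivp_dsol; lra|].
  pose proof (force_bounds (ivp_sol lam) x). lra.
Qed.

Lemma ivp_sol_le_slope lam s : 0 <= s <= T -> ivp_sol lam s <= lam * s.
Proof.
  intros Hs.
  pose proof (concave_le_tangent0 (ivp_sol lam) (ivp_dsol lam) T (cont_all_ivp_sol lam)
                (is_derive_ivp_sol lam) (ivp_dsol_nonincr lam) s Hs) as Ht.
  rewrite ivp_sol_0, ivp_dsol_0 in Ht. lra.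
Qed.

Lemma ivp_dsol_ge lam s : 0 <= s <= T -> lam - Hb * Gb * s <= ivp_dsol lam s.
Proof.
  intros Hs. destruct (Req_dec s 0) as [->|Hs0]; [rewrite ivp_dsol_0; lra|].
  destruct (MVT_is_derive (ivp_dsol lam) (fun s => - force (ivp_sol lam) s) 0 s)
    as [x [Hx HM]]; [lra|intros; apply is_derive_ivp_dsol; lra|intros; apply cont_all_ivp_dsol|].
  rewrite ivp_dsol_0 in HM. pose proof (force_bounds (ivp_sol lam) x). nra.
Qed.

Lemma ivp_sol_pos_early lam s : 0 < s <= T -> Hb * Gb * s < lam -> 0 < ivp_sol lam s.
Proof.
  intros Hs Hl.
  destruct (MVT_is_derive (ivp_sol lam) (ivp_dsol lam) 0 s) as [x [Hx HM]];
    [lra|intros; apply is_derive_ivp_sol; lra|intros; apply cont_all_ivp_sol|].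
  rewrite ivp_sol_0, Rminus_0_r, Rminus_0_r in HM. rewrite HM.
  pose proof (ivp_dsol_ge lam x ltac:(lra)). pose proof HbGb_ge0.
  assert (Hb * Gb * x <= Hb * Gb * s) by (apply Rmult_le_compat_l; lra).
  apply Rmult_lt_0_compat; lra.
Qed.

Definition energy (u1 du1 u2 du2 : R -> R) t := (u1 t - u2 t)² + (du1 t - du2 t)².
Definition energy_rate := 1 + Hb * Lg.

Lemma energy_ineq a b d : Rabs d <= Hb * Lg * Rabs a ->
  2 * (a * b) - 2 * (b * d) <= energy_rate * (a² + b²).
Proof.
  intros Hd. unfold energy_rate, Rsqr. pose proof HbLg_ge0.
  pose proof (Rabs_pos a). pose proof (Rabs_pos b).
  assert (E1 : - (b * d) <= Rabs b * Rabs d)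
    by (rewrite <- Rabs_mult, <- Rabs_Ropp; apply Rle_abs).
  assert (E2 : Rabs b * Rabs d <= Rabs b * (Hb * Lg * Rabs a))
    by (apply Rmult_le_compat_l; auto).
  assert (E3 : 2 * (Rabs a * Rabs b) <= a * a + b * b).
  { pose proof (Rle_0_sqr (Rabs a - Rabs b)). pose proof (Rsqr_abs a).
    pose proof (Rsqr_abs b). unfold Rsqr in *. lra. }
  assert (E4 : 2 * (a * b) <= a * a + b * b)
    by (pose proof (Rle_0_sqr (a - b)); unfold Rsqr in *; lra).
  assert (E5 : Hb * Lg * (2 * (Rabs a * Rabs b)) <= Hb * Lg * (a * a + b * b))
    by (apply Rmult_le_compat_l; auto).
  lra.
Qed.

Lemma is_derive_energy (u1 du1 u2 du2 : R -> R) t :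
  is_derive u1 t (du1 t) -> is_derive du1 t (- force u1 t) ->
  is_derive u2 t (du2 t) -> is_derive du2 t (- force u2 t) ->
  is_derive (energy u1 du1 u2 du2) t
    (2 * ((u1 t - u2 t) * (du1 t - du2 t)) - 2 * ((du1 t - du2 t) * (force u1 t - force u2 t))).
Proof.
  intros D1 D2 D3 D4.
  replace (2 * ((u1 t - u2 t) * (du1 t - du2 t))
           - 2 * ((du1 t - du2 t) * (force u1 t - force u2 t)))
    with ((du1 t - du2 t) * (u1 t - u2 t) + (u1 t - u2 t) * (du1 t - du2 t) +
          ((- force u1 t - - force u2 t) * (du1 t - du2 t)
           + (du1 t - du2 t) * (- force u1 t - - force u2 t))) by ring.
  unfold energy, Rsqr.
  apply (is_derive_Rplus (fun t => (u1 t - u2 t) * (u1 t - u2 t))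
                         (fun t => (du1 t - du2 t) * (du1 t - du2 t))).
  - apply (is_derive_Rmult (fun t => u1 t - u2 t) (fun t => u1 t - u2 t));
      apply is_derive_Rminus; auto.
  - apply (is_derive_Rmult (fun t => du1 t - du2 t) (fun t => du1 t - du2 t));
      apply is_derive_Rminus; auto.
Qed.

Lemma energy_gronwall (u1 du1 u2 du2 : R -> R) :
  (forall t, 0 < t < T ->
     is_derive u1 t (du1 t) /\ is_derive du1 t (- force u1 t) /\
     is_derive u2 t (du2 t) /\ is_derive du2 t (- force u2 t)) ->
  filterlim (energy u1 du1 u2 du2) (at_right 0) (locally (energy u1 du1 u2 du2 0)) ->
  forall s, 0 <= s < T ->
  (u1 s - u2 s)² <= energy u1 du1 u2 du2 0 * exp (energy_rate * T).
Proof.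
  intros Hd Hr s Hs. set (E := energy u1 du1 u2 du2).
  assert (HE : E s <= E 0 * exp (energy_rate * s)).
  { apply (gronwall E (fun t => 2 * ((u1 t - u2 t) * (du1 t - du2 t))
                              - 2 * ((du1 t - du2 t) * (force u1 t - force u2 t))) energy_rate T);
      auto.
    intros t Ht. destruct (Hd t Ht) as [D1 [D2 [D3 D4]]].
    split; [apply is_derive_energy; auto|apply energy_ineq, force_lipschitz]. }
  assert (exp (energy_rate * s) <= exp (energy_rate * T)).
  { assert (Hle : energy_rate * s <= energy_rate * T).
    { apply Rmult_le_compat_l; [|lra]. pose proof HbLg_ge0. unfold energy_rate. lra. }
    destruct Hle as [Hlt|Heq]; [left; apply exp_increasing, Hlt|rewrite Heq; lra]. }
  assert (0 <= E 0) by (unfold E, energy; apply Rplus_le_le_0_compat; apply Rle_0_sqr).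
  assert (E 0 * exp (energy_rate * s) <= E 0 * exp (energy_rate * T))
    by (apply Rmult_le_compat_l; auto).
  assert ((u1 s - u2 s)² <= E s)
    by (unfold E, energy; pose proof (Rle_0_sqr (du1 s - du2 s)); lra).
  lra.
Qed.

Lemma ivp_sol_lipschitz lam mu s : 0 <= s < T ->
  Rabs (ivp_sol lam s - ivp_sol mu s) <= sqrt (exp (energy_rate * T)) * Rabs (lam - mu).
Proof.
  intros Hs.
  assert (Hsq : (ivp_sol lam s - ivp_sol mu s)²
                  <= (sqrt (exp (energy_rate * T)) * Rabs (lam - mu))²).
  { rewrite Rsqr_mult, Rsqr_sqrt, <- Rsqr_abs by (left; apply exp_pos).
    replace ((lam - mu)²) with (energy (ivp_sol lam) (ivp_dsol lam) (ivp_sol mu) (ivp_dsol mu) 0)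
      by (unfold energy; rewrite !ivp_sol_0, !ivp_dsol_0; unfold Rsqr; ring).
    rewrite Rmult_comm. apply energy_gronwall; auto.
    - intros t Ht.
      split; [|split; [|split]];
        (apply is_derive_ivp_sol || apply is_derive_ivp_dsol); auto.
    - assert (HE : cont_all (energy (ivp_sol lam) (ivp_dsol lam) (ivp_sol mu) (ivp_dsol mu))).
      { unfold energy, Rsqr.
        apply cont_all_plus; apply cont_all_mult; apply cont_all_minus;
          (apply cont_all_ivp_sol || apply cont_all_ivp_dsol). }
      apply continuous_at_right, HE. }
  apply Rsqr_le_abs_0 in Hsq. rewrite (Rabs_right (sqrt _ * _)) in Hsq; auto.
  apply Rle_ge, Rmult_le_pos; [apply sqrt_pos|apply Rabs_pos].
Qed.

End TruncatedIVP.

Section PositiveSolution.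
Variables (p : R) (h w0 dw0 : R -> R).
Hypothesis h_pos : forall s, 0 < s -> 0 < h s.
Hypothesis w0_sol : ode_sol p h (fun s => 0 <= s) (fun s => 0 < s) w0 dw0.
Hypothesis w0_0 : w0 0 = 0.
Hypothesis w0_pos : forall s, 0 < s -> 0 < w0 s.

Lemma is_derive_w0 s : 0 < s -> is_derive w0 s (dw0 s).
Proof. intros. apply (proj2 w0_sol); auto. Qed.

Lemma is_derive_dw0 s : 0 < s -> is_derive dw0 s (- (h s * pnl p (w0 s))).
Proof. intros. apply (proj2 w0_sol); auto. Qed.

Lemma w0_at_right : filterlim w0 (at_right 0) (locally (w0 0)).
Proof. apply cont_within_nonneg_at_right. apply (proj1 w0_sol). lra. Qed.

Lemma dw0_at_right : filterlim dw0 (at_right 0) (locally (dw0 0)).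
Proof. apply cont_within_nonneg_at_right. apply (proj1 w0_sol). lra. Qed.

Lemma dw0_nonincr a b : 0 < a <= b -> dw0 b <= dw0 a.
Proof.
  intros Hab.
  apply (nonincreasing_of_derive_nonpos dw0 (fun s => - (h s * pnl p (w0 s)))); [lra| |].
  - intros x Hx. split; [apply is_derive_dw0; lra|].
    rewrite <- ppow_pnl by (apply w0_pos; lra).
    pose proof (ppow_gt0 p (w0 x) (w0_pos x ltac:(lra))). pose proof (h_pos x ltac:(lra)).
    nra.
  - intros x Hx. eapply is_derive_continuous, is_derive_dw0. lra.
Qed.

Lemma dw0_le_dw0_0 b : 0 < b -> dw0 b <= dw0 0.
Proof.
  intros Hb. apply (le_lim_at_right dw0 (dw0 b) (dw0 0) 0 b); auto.
  - intros a Ha. apply dw0_nonincr. lra.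
  - apply dw0_at_right.
Qed.

Lemma w0_le_slope s : 0 < s -> w0 s <= dw0 0 * s.
Proof.
  intros Hs.
  apply (le_lim_at_right (fun a => w0 a + dw0 0 * (s - a)) (w0 s) (dw0 0 * s) 0 s); auto.
  - intros a Ha. destruct (MVT_is_derive w0 dw0 a s) as [x [Hx HM]]; try lra.
    + intros x Hx. apply is_derive_w0. lra.
    + intros x Hx. eapply is_derive_continuous, is_derive_w0. lra.
    + pose proof (dw0_le_dw0_0 x ltac:(lra)). nra.
  - replace (dw0 0 * s) with (w0 0 + dw0 0 * (s - 0)) by (rewrite w0_0; ring).
    apply filterlim_Rplus; [apply w0_at_right|].
    apply (continuous_at_right (fun a => dw0 0 * (s - a))).
    apply (continuous_of_lipschitz _ (Rabs (dw0 0))); [apply Rabs_pos|]. intros y.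
    rewrite <- Rabs_mult, <- (Rabs_Ropp (_ * (y - _))). right. f_equal. ring.
Qed.

Lemma dw0_0_pos : 0 < dw0 0.
Proof. pose proof (w0_le_slope 1 ltac:(lra)). pose proof (w0_pos 1 ltac:(lra)). lra. Qed.

End PositiveSolution.

(** * Shooting *)

Section Shooting.
Variables (p : R) (h w0 dw0 : R -> R).
Hypothesis p_gt1 : 1 < p.
Hypothesis h_cont : forall s, 0 <= s -> cont_within (fun x => 0 <= x) h s.
Hypothesis h_pos : forall s, 0 < s -> 0 < h s.
Hypothesis w0_sol : ode_sol p h (fun s => 0 <= s) (fun s => 0 < s) w0 dw0.
Hypothesis w0_0 : w0 0 = 0.
Hypothesis w0_pos : forall s, 0 < s -> 0 < w0 s.
Variable c : R.
Hypothesis c_gt3 : 3 < c.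

Definition horizon := c + 1.
Definition h_trunc t := Rabs (h (clamp 0 horizon t)).

Variables (hmax hmin : R).
Hypothesis h_trunc_le : forall x, h_trunc x <= hmax.
Hypothesis hmin_pos : 0 < hmin.
Hypothesis hmin_le : forall x, 1 <= x <= 2 -> hmin <= h x.

Definition lam0 := dw0 0.
(* [ppow p y >= 7 / hmin * y] once [y >= level / 6]; the slope [lam_max] lifts a shot to
   [level / 2] by time [level / lam_max < 1] while the force stays below [lam_max / 2]. *)
Definition level := 6 * Rpower (7 / hmin) (/ (p - 1)).
Definition lam_max := Rmax (Rmax lam0 (level + 1)) (2 * level * hmax * ppow p level + 1).
Definition cutoff := lam_max * horizon.
Definition g_trunc := ppow_trunc p cutoff.
Definition g_lip := p * Rpower cutoff (p - 1).
Definition g_max := ppow p cutoff.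

Definition shot lam := ivp_sol h_trunc g_trunc horizon lam.
Definition dshot lam := ivp_dsol h_trunc g_trunc horizon lam.
Definition shot_lip := sqrt (exp (energy_rate hmax g_lip * horizon)).

Lemma horizon_pos : 0 < horizon.
Proof. unfold horizon; lra. Qed.

Lemma lam0_pos : 0 < lam0.
Proof. exact (dw0_0_pos p h w0 dw0 h_pos w0_sol w0_0 w0_pos). Qed.

Lemma level_pos : 0 < level.
Proof. unfold level. pose proof (Rpower_gt0 (7 / hmin) (/ (p - 1))). lra. Qed.

Lemma lam_max_ge :
  lam0 <= lam_max /\ level + 1 <= lam_max /\ 2 * level * hmax * ppow p level + 1 <= lam_max.
Proof.
  unfold lam_max.
  pose proof (Rmax_l (Rmax lam0 (level + 1)) (2 * level * hmax * ppow p level + 1)).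
  pose proof (Rmax_r (Rmax lam0 (level + 1)) (2 * level * hmax * ppow p level + 1)).
  pose proof (Rmax_l lam0 (level + 1)). pose proof (Rmax_r lam0 (level + 1)). lra.
Qed.

Lemma cutoff_pos : 0 < cutoff.
Proof.
  unfold cutoff. pose proof lam_max_ge. pose proof level_pos. pose proof horizon_pos. nra.
Qed.

Lemma slope_le_cutoff lam s : lam <= lam_max -> 0 <= s <= horizon -> lam * s <= cutoff.
Proof.
  intros Hl Hs. unfold cutoff. pose proof lam_max_ge. pose proof level_pos.
  apply Rle_trans with (lam_max * s); [apply Rmult_le_compat_r; lra|].
  apply Rmult_le_compat_l; lra.
Qed.

Lemma cont_all_h_trunc : cont_all h_trunc.
Proof.
  pose proof horizon_pos.
  apply cont_all_abs. intros x. apply (continuous_comp_cont_within (fun x => 0 <= x)).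
  - intros t. apply clamp_range. lra.
  - apply continuous_clamp. lra.
  - apply h_cont. apply clamp_range. lra.
Qed.

Lemma h_trunc_bounds x : 0 <= h_trunc x <= hmax.
Proof. split; [apply Rabs_pos|apply h_trunc_le]. Qed.

Lemma h_trunc_eq s : 0 < s <= horizon -> h_trunc s = h s.
Proof.
  intros Hs. unfold h_trunc. rewrite clamp_id by lra.
  apply Rabs_right. pose proof (h_pos s). lra.
Qed.

Lemma g_trunc_lipschitz a b : Rabs (g_trunc a - g_trunc b) <= g_lip * Rabs (a - b).
Proof. apply ppow_trunc_lipschitz; auto. apply cutoff_pos. Qed.

Lemma g_trunc_bounds a : 0 <= g_trunc a <= g_max.
Proof. apply ppow_trunc_bounds; auto. apply cutoff_pos. Qed.

Ltac truncated_ivp_hyps :=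
  first [ exact horizon_pos | exact cont_all_h_trunc | exact h_trunc_bounds
        | exact g_trunc_lipschitz | exact g_trunc_bounds ].

Lemma cont_all_shot lam : cont_all (shot lam).
Proof. eapply cont_all_ivp_sol; truncated_ivp_hyps. Qed.

Lemma cont_all_dshot lam : cont_all (dshot lam).
Proof. eapply cont_all_ivp_dsol; truncated_ivp_hyps. Qed.

Lemma is_derive_shot lam s : 0 < s < horizon -> is_derive (shot lam) s (dshot lam s).
Proof. eapply is_derive_ivp_sol; truncated_ivp_hyps. Qed.

Lemma is_derive_dshot lam s : 0 < s < horizon ->
  is_derive (dshot lam) s (- (h_trunc s * g_trunc (shot lam s))).
Proof. eapply is_derive_ivp_dsol; truncated_ivp_hyps. Qed.

Lemma shot_0 lam : shot lam 0 = 0.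
Proof. eapply ivp_sol_0; truncated_ivp_hyps. Qed.

Lemma dshot_0 lam : dshot lam 0 = lam.
Proof. eapply ivp_dsol_0; truncated_ivp_hyps. Qed.

Lemma dshot_nonincr lam a b : 0 <= a <= b -> b <= horizon -> dshot lam b <= dshot lam a.
Proof. eapply ivp_dsol_nonincr; truncated_ivp_hyps. Qed.

Lemma shot_le_slope lam s : 0 <= s <= horizon -> shot lam s <= lam * s.
Proof. eapply ivp_sol_le_slope; truncated_ivp_hyps. Qed.

Lemma shot_pos_small_time lam s : 0 < s <= horizon -> hmax * g_max * s < lam -> 0 < shot lam s.
Proof. eapply ivp_sol_pos_early; truncated_ivp_hyps. Qed.

Lemma shot_lipschitz lam mu s : 0 <= s < horizon ->
  Rabs (shot lam s - shot mu s) <= shot_lip * Rabs (lam - mu).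
Proof. eapply ivp_sol_lipschitz; truncated_ivp_hyps. Qed.

Lemma shot_equation lam s : lam <= lam_max -> 0 < s <= horizon -> 0 < shot lam s ->
  h_trunc s * g_trunc (shot lam s) = h s * pnl p (shot lam s).
Proof.
  intros Hl Hs Hpos. rewrite h_trunc_eq by lra. unfold g_trunc.
  rewrite ppow_trunc_id, ppow_pnl; auto. split; [lra|].
  pose proof (shot_le_slope lam s ltac:(lra)). pose proof (slope_le_cutoff lam s Hl ltac:(lra)).
  lra.
Qed.

Lemma w0_eq_shot_lam0 s : 0 <= s < horizon -> w0 s = shot lam0 s.
Proof.
  intros Hs.
  assert (Hq : (w0 s - shot lam0 s)² <=
    energy w0 dw0 (shot lam0) (dshot lam0) 0 * exp (energy_rate hmax g_lip * horizon)).
  { eapply energy_gronwall; try truncated_ivp_hyps; [| |exact Hs].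
    - intros t Ht. split; [|split; [|split]].
      + apply (is_derive_w0 p h w0 dw0 w0_sol). lra.
      + assert (Hw : 0 < w0 t <= cutoff).
        { split; [apply w0_pos; lra|].
          pose proof (w0_le_slope p h w0 dw0 h_pos w0_sol w0_0 w0_pos t ltac:(lra)).
          pose proof (slope_le_cutoff lam0 t (proj1 lam_max_ge) ltac:(lra)).
          fold lam0 in *. lra. }
        unfold force. rewrite h_trunc_eq by lra. unfold g_trunc.
        rewrite ppow_trunc_id, ppow_pnl by lra.
        apply (is_derive_dw0 p h w0 dw0 w0_sol). lra.
      + apply is_derive_shot; auto.
      + apply is_derive_dshot; auto.
    - unfold energy, Rsqr.
      apply filterlim_Rplus; apply filterlim_Rmult; apply filterlim_Rminus;
        try apply (w0_at_right p h w0 dw0 w0_sol);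
        try apply (dw0_at_right p h w0 dw0 w0_sol);
        apply continuous_at_right; (apply cont_all_shot || apply cont_all_dshot). }
  replace (energy w0 dw0 (shot lam0) (dshot lam0) 0) with 0 in Hq
    by (unfold energy; rewrite w0_0, shot_0, dshot_0; unfold lam0, Rsqr; ring).
  pose proof (Rle_0_sqr (w0 s - shot lam0 s)).
  assert (E : (w0 s - shot lam0 s)² = 0) by lra.
  apply Rsqr_0_uniq in E. lra.
Qed.

Lemma shot_lam0_pos s : 0 < s <= c -> 0 < shot lam0 s.
Proof.
  intros Hs. rewrite <- w0_eq_shot_lam0 by (unfold horizon; lra). apply w0_pos. lra.
Qed.

Lemma shot_max_climbs : level / 2 <= shot lam_max (level / lam_max).
Proof.
  destruct lam_max_ge as [_ [HL2 HL3]]. pose proof level_pos.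
  pose proof (h_trunc_bounds 0). pose proof (ppow_ge0 p level ltac:(lra)).
  set (d := level / lam_max).
  assert (Hd : d * lam_max = level) by (unfold d; field; lra).
  assert (Hd01 : 0 < d < 1).
  { split; [unfold d; apply Rdiv_lt_0_compat; lra|].
    apply Rmult_lt_reg_r with lam_max; lra. }
  assert (Hsteep : forall t, 0 < t <= d -> lam_max / 2 <= dshot lam_max t).
  { intros t Ht.
    destruct (MVT_is_derive (dshot lam_max) (fun s => - (h_trunc s * g_trunc (shot lam_max s))) 0 t)
      as [x [Hx HM]]; [lra|intros; apply is_derive_dshot; unfold horizon; lra
                           |intros; apply cont_all_dshot|].
    rewrite dshot_0 in HM.
    assert (Hg : g_trunc (shot lam_max x) <= ppow p level).
    { apply ppow_trunc_le; try lra; [apply cutoff_pos|].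
      pose proof (shot_le_slope lam_max x ltac:(unfold horizon; lra)). nra. }
    pose proof (h_trunc_bounds x). pose proof (g_trunc_bounds (shot lam_max x)).
    assert (h_trunc x * g_trunc (shot lam_max x) * t <= hmax * ppow p level * d)
      by (apply Rmult_le_compat; try nra; apply Rmult_le_compat; lra).
    assert (hmax * ppow p level * d <= lam_max / 2).
    { apply Rmult_le_reg_r with lam_max; [lra|]. rewrite Rmult_assoc, Hd. nra. }
    lra. }
  destruct (MVT_is_derive (shot lam_max) (dshot lam_max) 0 d) as [x [Hx HM]];
    [lra|intros; apply is_derive_shot; unfold horizon; lra|intros; apply cont_all_shot|].
  rewrite shot_0 in HM. pose proof (Hsteep x ltac:(lra)). nra.
Qed.

Lemma ppow_ge_level y : level / 6 <= y -> 7 / hmin * y <= ppow p y.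
Proof.
  intros Hy. pose proof level_pos. unfold ppow. rewrite Rmult_comm.
  apply Rmult_le_compat_l; [lra|].
  replace (7 / hmin) with (Rpower (level / 6) (p - 1)).
  - apply Rle_Rpower_l; lra.
  - unfold level. replace (6 * Rpower (7 / hmin) (/ (p - 1)) / 6)
      with (Rpower (7 / hmin) (/ (p - 1))) by field.
    rewrite Rpower_mult. replace (/ (p - 1) * (p - 1)) with 1 by (field; lra).
    apply Rpower_1. apply Rdiv_lt_0_compat; lra.
Qed.

Lemma dshot_drop lam y : lam <= lam_max -> 0 < y ->
  (forall x, 1 <= x <= 2 -> y <= shot lam x) ->
  hmin * ppow p y <= dshot lam 1 - dshot lam 2.
Proof.
  intros Hl Hy Hlow.
  destruct (MVT_is_derive (dshot lam) (fun s => - (h_trunc s * g_trunc (shot lam s))) 1 2)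
    as [x [Hx HM]]; [lra|intros; apply is_derive_dshot; unfold horizon; lra
                         |intros; apply cont_all_dshot|].
  pose proof (Hlow x ltac:(lra)).
  rewrite shot_equation, <- ppow_pnl in HM by (unfold horizon; lra).
  pose proof (hmin_le x ltac:(lra)). pose proof (ppow_le_compat p y (shot lam x) ltac:(lra) ltac:(lra)).
  pose proof (ppow_ge0 p y ltac:(lra)).
  assert (hmin * ppow p y <= h x * ppow p (shot lam x)) by (apply Rmult_le_compat; lra).
  lra.
Qed.

Lemma shot_max_not_positive : ~ (forall s, 0 < s <= c -> 0 < shot lam_max s).
Proof.
  intros Hpos. destruct lam_max_ge as [_ [HL2 _]]. pose proof level_pos.
  set (u := shot lam_max). set (d := level / lam_max).
  pose proof shot_max_climbs as Hclimb. fold u d in Hclimb.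
  assert (Hd01 : 0 < d < 1).
  { split; [unfold d; apply Rdiv_lt_0_compat; lra|].
    apply Rmult_lt_reg_r with lam_max; [lra|]. unfold d. field_simplify; lra. }
  pose proof (concave_above_chord u (dshot lam_max) horizon (cont_all_shot lam_max)
                (is_derive_shot lam_max) (dshot_nonincr lam_max)) as Hchord.
  assert (Hc : 0 < u c) by (apply Hpos; lra).
  assert (Hu1 : level / 3 <= u 1).
  { pose proof (Hchord d 1 c ltac:(lra) ltac:(unfold horizon; lra)). nra. }
  assert (Hlow : forall x, 1 <= x <= 2 -> u 1 / 2 <= u x).
  { intros x Hx. destruct (Req_dec x 1) as [->|Hx1]; [lra|].
    pose proof (Hchord 1 x c ltac:(lra) ltac:(unfold horizon; lra)).
    assert (0 < u x) by (apply Hpos; lra). nra. }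
  pose proof (dshot_drop lam_max (u 1 / 2) ltac:(lra) ltac:(lra) Hlow) as Hdrop.
  pose proof (concave_slope_drop u (dshot lam_max) horizon (cont_all_shot lam_max)
                (is_derive_shot lam_max) (dshot_nonincr lam_max) c ltac:(unfold horizon; lra)
                (shot_0 lam_max) ltac:(left; apply Hpos; lra) ltac:(lra)) as Hconc.
  pose proof (ppow_ge_level (u 1 / 2) ltac:(lra)).
  assert (hmin * (7 / hmin * (u 1 / 2)) <= hmin * ppow p (u 1 / 2))
    by (apply Rmult_le_compat_l; lra).
  replace (hmin * (7 / hmin * (u 1 / 2))) with (7 / 2 * u 1) in * by (field; lra).
  fold u in Hdrop, Hconc. lra.
Qed.

Definition positive_shot lam := forall s, 0 < s <= c -> 0 < shot lam s.

Lemma shot_pos_early : exists s0, 0 < s0 <= c /\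
  forall lam s, lam0 <= lam -> 0 < s <= s0 -> 0 < shot lam s.
Proof.
  pose proof lam0_pos. pose proof (h_trunc_bounds 0). pose proof (g_trunc_bounds 0).
  assert (HM : 0 <= hmax * g_max) by (apply Rmult_le_pos; lra).
  set (s0 := Rmin c (lam0 / (hmax * g_max + 1))).
  assert (Hs0 : 0 < s0) by (apply Rmin_pos; [lra|apply Rdiv_lt_0_compat; lra]).
  assert (Hs0M : (hmax * g_max + 1) * s0 <= lam0).
  { apply Rle_trans with ((hmax * g_max + 1) * (lam0 / (hmax * g_max + 1))).
    - apply Rmult_le_compat_l; [lra|apply Rmin_r].
    - right. field. lra. }
  assert (Hs0c : s0 <= c) by apply Rmin_l.
  exists s0. split; [lra|].
  intros lam s Hl Hs.
  apply shot_pos_small_time; [unfold horizon; lra|].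
  assert (hmax * g_max * s <= hmax * g_max * s0) by (apply Rmult_le_compat_l; lra).
  lra.
Qed.

Lemma shot_close lam mu s eps : 0 <= s <= c -> 0 < eps ->
  Rabs (lam - mu) <= eps / (shot_lip + 1) -> Rabs (shot lam s - shot mu s) < eps.
Proof.
  intros Hs He Hl. pose proof (shot_lipschitz lam mu s ltac:(unfold horizon; lra)).
  pose proof (sqrt_pos (exp (energy_rate hmax g_lip * horizon))). fold shot_lip in *.
  assert (shot_lip * Rabs (lam - mu) <= shot_lip * (eps / (shot_lip + 1)))
    by (apply Rmult_le_compat_l; lra).
  assert (shot_lip * (eps / (shot_lip + 1)) < eps).
  { apply Rmult_lt_reg_r with (shot_lip + 1); [lra|].
    replace (shot_lip * (eps / (shot_lip + 1)) * (shot_lip + 1)) with (shot_lip * eps)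
      by (field; lra).
    nra. }
  lra.
Qed.

Lemma positive_shot_open_right lam : lam0 <= lam -> positive_shot lam ->
  exists eps, 0 < eps /\ forall mu, lam <= mu <= lam + eps -> positive_shot mu.
Proof.
  intros Hl HP. destruct shot_pos_early as [s0 [Hs0 Hearly]].
  destruct (continuity_ab_min (shot lam) s0 c ltac:(lra)
              (fun x _ => proj2 (continuity_pt_filterlim _ _) (cont_all_shot lam x)))
    as [smin [Hmin Hsmin]].
  assert (Hm0 : 0 < shot lam smin) by (apply HP; lra).
  pose proof (sqrt_pos (exp (energy_rate hmax g_lip * horizon))). fold shot_lip in *.
  exists (shot lam smin / (shot_lip + 1)). split; [apply Rdiv_lt_0_compat; lra|].
  intros mu Hmu s Hs. destruct (Rle_dec s s0) as [Hss|Hss]; [apply Hearly; lra|].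
  pose proof (Hmin s ltac:(lra)).
  assert (Rabs (shot lam s - shot mu s) < shot lam smin).
  { apply shot_close; auto; [lra|]. rewrite Rabs_minus_sym, Rabs_right; lra. }
  split_Rabs; lra.
Qed.

Lemma shot_nonneg_of_positive_below ls : lam0 < ls ->
  (forall mu, lam0 <= mu < ls -> positive_shot mu) ->
  forall s, 0 < s <= c -> 0 <= shot ls s.
Proof.
  intros Hls Hbelow s Hs. apply Rnot_lt_le. intros Hneg.
  pose proof (sqrt_pos (exp (energy_rate hmax g_lip * horizon))). fold shot_lip in *.
  set (d := - shot ls s).
  assert (Hdd : 0 < d / (shot_lip + 1)) by (apply Rdiv_lt_0_compat; unfold d; lra).
  set (mu := Rmax lam0 (ls - d / (shot_lip + 1))).
  assert (Hmu1 : lam0 <= mu) by apply Rmax_l.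
  assert (Hmu2 : ls - d / (shot_lip + 1) <= mu) by apply Rmax_r.
  assert (Hmu3 : mu < ls) by (unfold mu; apply Rmax_lub_lt; lra).
  pose proof (Hbelow mu ltac:(lra) s Hs).
  assert (Rabs (shot ls s - shot mu s) < d).
  { apply shot_close; [lra|unfold d; lra|]. rewrite Rabs_right; lra. }
  unfold d in *. split_Rabs; lra.
Qed.

(* Concavity: [u z = 0] and [u c >= 0] force [u <= 0] on [[0, z]], against early positivity. *)
Lemma shot_first_zero ls z : lam0 <= ls -> (forall s, 0 < s <= c -> 0 <= shot ls s) ->
  0 < z <= c -> shot ls z <= 0 -> z = c.
Proof.
  intros Hls Hnn Hz Hzle. destruct (Req_dec z c) as [|Hzc]; auto. exfalso.
  destruct shot_pos_early as [s0 [Hs0 Hearly]].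
  set (t := Rmin (z / 2) s0).
  assert (Ht : 0 < t <= s0 /\ t <= z / 2)
    by (unfold t; split; [split; [apply Rmin_pos|apply Rmin_r]|apply Rmin_l]; lra).
  pose proof (Hnn z Hz). pose proof (Hnn c ltac:(lra)).
  pose proof (concave_above_chord (shot ls) (dshot ls) horizon (cont_all_shot ls)
                (is_derive_shot ls) (dshot_nonincr ls) t z c
                ltac:(lra) ltac:(unfold horizon; lra)).
  pose proof (Hearly ls t Hls ltac:(lra)).
  assert (shot ls z = 0) by lra.
  nra.
Qed.

Lemma positive_slopes_sup : exists ls, lam0 <= ls <= lam_max /\
  (forall mu, lam0 <= mu < ls -> positive_shot mu) /\ ~ positive_shot ls.
Proof.
  destruct lam_max_ge as [HL1 _].
  set (S := fun lam => lam0 <= lam <= lam_max /\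
                       forall mu, lam0 <= mu <= lam -> positive_shot mu).
  assert (HS0 : S lam0).
  { split; [lra|]. intros mu Hmu. replace mu with lam0 by lra. exact shot_lam0_pos. }
  destruct (completeness S) as [ls [Hub Hlub]];
    [exists lam_max; intros x [Hx _]; lra|exists lam0; exact HS0|].
  assert (Hls0 : lam0 <= ls) by (apply Hub, HS0).
  assert (HlsL : ls <= lam_max) by (apply Hlub; intros x [Hx _]; lra).
  assert (Hbelow : forall mu, lam0 <= mu < ls -> positive_shot mu).
  { intros mu Hmu.
    destruct (classic (exists lam, S lam /\ mu < lam)) as [[lam [[_ Hl] Hml]]|Hn].
    - apply Hl; lra.
    - exfalso. assert (ls <= mu); [|lra]. apply Hlub. intros x Hx.
      apply Rnot_lt_le. intros Hc'. apply Hn. exists x; auto. }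
  exists ls. split; [lra|split; [exact Hbelow|]].
  intros HP. destruct (positive_shot_open_right ls Hls0 HP) as [eps [Heps Hop]].
  destruct (Rlt_le_dec ls lam_max) as [Hlt|Hge].
  - set (ls' := Rmin (ls + eps) lam_max).
    assert (Hm1 : ls' <= ls + eps) by apply Rmin_l.
    assert (Hm2 : ls' <= lam_max) by apply Rmin_r.
    assert (HS' : S ls').
    { split; [split; [apply Rmin_glb; lra|exact Hm2]|].
      intros mu Hmu. destruct (Rlt_le_dec mu ls); [apply Hbelow; lra|].
      apply Hop. lra. }
    pose proof (Hub ls' HS'). assert (ls < ls') by (unfold ls'; apply Rmin_glb_lt; lra).
    lra.
  - apply shot_max_not_positive. replace lam_max with ls by lra. exact HP.
Qed.

Lemma shooting_slope : exists ls, lam0 < ls <= lam_max /\ shot ls c = 0 /\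
  forall s, 0 < s < c -> 0 < shot ls s.
Proof.
  destruct positive_slopes_sup as [ls [[Hls0 HlsL] [Hbelow Hnot]]].
  assert (Hnn : forall s, 0 < s <= c -> 0 <= shot ls s).
  { destruct (Req_dec ls lam0) as [->|Hne].
    - intros s Hs. left. apply shot_lam0_pos, Hs.
    - apply shot_nonneg_of_positive_below; auto. lra. }
  assert (Hz : exists z, 0 < z <= c /\ shot ls z <= 0).
  { apply NNPP. intros Hn. apply Hnot. intros s Hs.
    apply Rnot_le_lt. intros Hle. apply Hn. exists s; auto. }
  destruct Hz as [z [Hz Hzle]].
  pose proof (shot_first_zero ls z Hls0 Hnn Hz Hzle) as ->.
  exists ls. split; [split; [|exact HlsL]|split].
  - destruct (Req_dec ls lam0) as [E|E]; [|lra]. exfalso.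
    rewrite E in Hzle. pose proof (shot_lam0_pos c ltac:(lra)). lra.
  - pose proof (Hnn c ltac:(lra)). lra.
  - intros s Hs. destruct (Rle_lt_dec (shot ls s) 0) as [Hle|]; auto. exfalso.
    pose proof (shot_first_zero ls s Hls0 Hnn ltac:(lra) Hle). lra.
Qed.

Lemma boundary_value_problem_solution : exists w1 dw1 : R -> R,
  ode_sol p h (fun s => 0 <= s <= c) (fun s => 0 < s < c) w1 dw1 /\
  w1 0 = 0 /\ w1 c = 0 /\ (forall s, 0 < s < c -> 0 < w1 s) /\ dw0 0 < dw1 0.
Proof.
  destruct shooting_slope as [ls [Hls [Hc0 Hpos]]].
  exists (shot ls), (dshot ls). split; [split|].
  - intros s Hs. split; apply cont_within_of_continuous; [apply cont_all_shot|apply cont_all_dshot].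
  - intros s Hs. split; [apply is_derive_shot; unfold horizon; lra|].
    rewrite <- shot_equation by (unfold horizon; try apply Hpos; lra).
    apply is_derive_dshot. unfold horizon; lra.
  - rewrite shot_0, dshot_0. fold lam0. repeat split; auto; lra.
Qed.

End Shooting.

Theorem lemma2p6 (p : R) (h : R -> R)
  (Hp : 1 < p)
  (Hh_cont : forall s, 0 <= s -> cont_within (fun x => 0 <= x) h s)
  (Hh_pos : forall s, 0 < s -> 0 < h s)
  (w0 dw0 : R -> R)
  (Hw0 : ode_sol p h (fun s => 0 <= s) (fun s => 0 < s) w0 dw0)
  (Hw00 : w0 0 = 0)
  (Hw0pos : forall s, 0 < s -> 0 < w0 s) :
  exists C : R, forall c : R, C < c -> 0 < c ->
    exists w1 dw1 : R -> R,
      ode_sol p h (fun s => 0 <= s <= c) (fun s => 0 < s < c) w1 dw1 /\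
      w1 0 = 0 /\ w1 c = 0 /\
      (forall s, 0 < s < c -> 0 < w1 s) /\
      dw0 0 < dw1 0.
Proof.
  exists 3. intros c Hc _.
  pose proof (horizon_pos c Hc) as HT.
  destruct (continuity_ab_maj (h_trunc h c) 0 (horizon c) ltac:(lra)
     (fun x _ => proj2 (continuity_pt_filterlim _ _) (cont_all_h_trunc h Hh_cont c Hc x)))
    as [xmax [Hxmax _]].
  destruct (continuity_ab_min h 1 2 ltac:(lra)
     (fun x Hx => proj2 (continuity_pt_filterlim _ _)
        (continuous_of_cont_within_nonneg h x ltac:(lra) (Hh_cont x ltac:(lra)))))
    as [xmin [Hxmin Hxmin12]].
  apply (boundary_value_problem_solution p h w0 dw0 Hp Hh_cont Hh_pos Hw0 Hw00 Hw0pos c Hc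
           (h_trunc h c xmax) (h xmin)).
  - intros x. replace (h_trunc h c x) with (h_trunc h c (clamp 0 (horizon c) x))
      by (unfold h_trunc; rewrite (clamp_id 0 _ (clamp 0 _ x)); auto; apply clamp_range; lra).
    apply Hxmax, clamp_range. lra.
  - apply Hh_pos. lra.
  - exact Hxmin.
Qed.
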